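(* Let $A_i,B_i,C_i$ ($i=1,2,3$) be random variables on a probability space with values in $\{-1,1\}$, and write ${\rm E}$ for expectation. Suppose that ${\rm E}(A_1^{k_1}A_2^{k_2}A_3^{k_3}C_1^{k_4}C_2^{k_5}C_3^{k_6})={\rm E}(A_1^{k_1}A_2^{k_2}A_3^{k_3})\,{\rm E}(C_1^{k_4}C_2^{k_5}C_3^{k_6})$ for all $k_1,\dots,k_6\in\{0,1\}$; that ${\rm E}(A_i)={\rm E}(B_i)={\rm E}(C_i)=0$ for $i\in\{1,2,3\}$; that ${\rm E}(A_iB_j)={\rm E}(B_iC_j)=0$ for $i\neq j$; and that ${\rm E}(A_iB_jC_k)=0$ whenever $i,j,k\in\{1,2,3\}$ with $|\{i,j,k\}|\le2$. Then $$\frac13\sum_{i=1}^3\big({\rm E}(B_iC_i)-{\rm E}(A_iB_i)\big)-\sum_{\{i,j,k\}=\{1,2,3\}}{\rm E}(A_iB_jC_k)\le4,$$ where the last sum is over the six permutations $(i,j,k)$ of $(1,2,3)$. *)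

From HB Require Import structures.
From mathcomp Require Import all_boot all_order all_algebra all_fingroup.
From mathcomp Require Import all_classical all_reals all_analysis.
Set Implicit Arguments. Unset Strict Implicit. Unset Printing Implicit Defensive.

(* Grouping the six permutations by their middle index j, the left-hand side is
   the sum over j of E(L_j), where L_j = (B_jC_j - A_jB_j)/3 - A_iB_jC_k - A_kB_jC_i
   and {i, j, k} = {1, 2, 3}; so it suffices that E(L_j) <= 4/3.  L_j is dominated
   pointwise by a polynomial in the +-1 variables whose expectation, by the
   independence of the A's from the C's and the vanishing means, only involves
   alpha = E(A_iA_k), gamma = E(C_iC_k) and a term at most 1.  One majorant works
   when alpha gamma <= 0; otherwise one first adds s (A_iB_jC_i + A_kB_jC_k), whose
   expectation vanishes, with s the common sign of alpha and gamma. *)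

From HB Require Import structures.
From mathcomp Require Import all_boot all_order all_algebra all_fingroup.
From mathcomp Require Import all_classical all_reals all_analysis.
From mathcomp Require Import measurable_realfun ring lra.
Set Implicit Arguments. Unset Strict Implicit. Unset Printing Implicit Defensive.
Import Order.TTheory GRing.Theory Num.Theory.
Local Open Scope ring_scope.

Definition pm1 {R : pzRingType} (x : R) := x = 1 \/ x = -1.

Section real_expectation.
Context d (T : measurableType d) (R : realType) (P : probability T R).
Implicit Types f g : T -> R.

Definition bounded_measurable (f : T -> R) :=
  measurable_fun setT f /\ exists M : R, forall w, `|f w| <= M.

Definition Er (f : T -> R) : R := fine ('E_P[f])%E.

Lemma bounded_measurable_Lfun f : bounded_measurable f -> f \in Lfun P 1.
Proof.
move=> [mf [M fM]]; apply/Lfun1_integrable.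
apply: (@le_integrable _ _ _ _ _ _ _ (EFin \o cst `|M|)) => //.
- exact/measurable_EFinP.
- by move=> w _; rewrite /= lee_fin normr_id (le_trans (fM w)) ?ler_norm.
- exact: finite_measure_integrable_cst.
Qed.

Lemma ErE f : bounded_measurable f -> ('E_P[f] = (Er f)%:E)%E.
Proof.
by move=> bf; rewrite /Er fineK // expectation_fin_num // bounded_measurable_Lfun.
Qed.

Lemma bounded_measurable_cst k : bounded_measurable (fun => k).
Proof. by split; [exact: measurable_cst | exists `|k|]. Qed.

Lemma bounded_measurableD f g : bounded_measurable f -> bounded_measurable g ->
  bounded_measurable (fun w => f w + g w).
Proof.
move=> [mf [M fM]] [mg [N gN]]; split; first exact: measurable_funD.
by exists (M + N) => w; rewrite (le_trans (ler_normD _ _)) // lerD.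
Qed.

Lemma bounded_measurableB f g : bounded_measurable f -> bounded_measurable g ->
  bounded_measurable (fun w => f w - g w).
Proof.
move=> [mf [M fM]] [mg [N gN]]; split; first exact: measurable_funB.
by exists (M + N) => w; rewrite (le_trans (ler_normB _ _)) // lerD.
Qed.

Lemma bounded_measurableM f g : bounded_measurable f -> bounded_measurable g ->
  bounded_measurable (fun w => f w * g w).
Proof.
move=> [mf [M fM]] [mg [N gN]]; split; first exact: measurable_funM.
by exists (M * N) => w; rewrite normrM ler_pM.
Qed.

Lemma pm1_bounded_measurable f :
  measurable_fun setT f -> (forall w, pm1 (f w)) -> bounded_measurable f.
Proof.
by move=> mf f1; split=> //; exists 1 => w; case: (f1 w) => ->; rewrite ?normrN normr1.
Qed.

Lemma Er_cst k : Er (fun => k) = k.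
Proof. by rewrite /Er expectation_cst. Qed.

Lemma ErD f g : bounded_measurable f -> bounded_measurable g ->
  Er (fun w => f w + g w) = Er f + Er g.
Proof.
move=> bf bg; rewrite /Er (_ : (fun w => f w + g w) = f \+ g) //.
by rewrite expectationD ?bounded_measurable_Lfun // (ErE bf) (ErE bg).
Qed.

Lemma ErB f g : bounded_measurable f -> bounded_measurable g ->
  Er (fun w => f w - g w) = Er f - Er g.
Proof.
move=> bf bg; rewrite /Er (_ : (fun w => f w - g w) = f \- g) //.
by rewrite expectationB ?bounded_measurable_Lfun // (ErE bf) (ErE bg).
Qed.

Lemma ErZ k f : bounded_measurable f -> Er (fun w => k * f w) = k * Er f.
Proof.
move=> bf; rewrite /Er (_ : (fun w => k * f w) = k \o* f); last first.
  by apply/funext => w; rewrite /= mulrC.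
by rewrite expectationZl ?bounded_measurable_Lfun // (ErE bf).
Qed.

Lemma Er_le f g : bounded_measurable f -> bounded_measurable g ->
  (forall w, f w <= g w) -> Er f <= Er g.
Proof.
move=> bf bg fg; rewrite -subr_ge0 -ErB //.
by apply/fine_ge0/expectation_ge0 => w; rewrite subr_ge0.
Qed.

Lemma Er_norm_le f M : bounded_measurable f -> (forall w, `|f w| <= M) ->
  `|Er f| <= M.
Proof.
move=> bf fM; have fM2 w : - M <= f w <= M by rewrite -ler_norml.
rewrite ler_norml; apply/andP; split.
  rewrite -[- M]Er_cst; apply: Er_le (bounded_measurable_cst _) bf _ => w.
  by case/andP: (fM2 w).
rewrite -[M]Er_cst; apply: Er_le bf (bounded_measurable_cst _) _ => w.
by case/andP: (fM2 w).
Qed.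

End real_expectation.


Section finite_products.
Context (I : finType) (T : Type) (R : comPzRingType).
Implicit Types (X : I -> T -> R) (S : {set I}).

Definition prodf X S : T -> R := fun w => \prod_(i in S) X i w.

Lemma prodf_set1 X i : prodf X [set i] = X i.
Proof. by apply/funext => w; rewrite /prodf big_set1. Qed.

Lemma prodf_setU1 X i S w : i \notin S -> prodf X (i |: S) w = X i w * prodf X S w.
Proof. by move=> iS; rewrite /prodf big_setU1. Qed.

Lemma prodf_set2 X a b w : a != b -> prodf X [set a; b] w = X a w * X b w.
Proof. by move=> ab; rewrite prodf_setU1 ?prodf_set1 // inE. Qed.

End finite_products.

Lemma prod_ord3 (R : comPzRingType) (F : 'I_3 -> R) (S : {set 'I_3}) :
  \prod_(i in S) F i = F 0 ^+ (0 \in S) * F 1 ^+ (1 \in S) * F 2 ^+ (2 \in S).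
Proof.
rewrite big_mkcond !big_ord_recl big_ord0 /= mulr1 mulrA.
have -> : lift ord0 (lift ord0 ord0) = 2 :> 'I_3 by apply: val_inj.
have -> : lift ord0 ord0 = 1 :> 'I_3 by apply: val_inj.
have -> : ord0 = 0 :> 'I_3 by apply: val_inj.
by congr (_ * _ * _); case: (_ \in S).
Qed.

Section perm_sums.
Context (R : numDomainType).

Lemma sum_perm_eval n (x : 'I_n) (F : 'I_n -> R) :
  \sum_(s : 'S_n) F (s x) = (\sum_i F i) *+ n.-1`!.
Proof.
have indep y : \sum_(s : 'S_n) F (s y) = \sum_(s : 'S_n) F (s x).
  rewrite [RHS](reindex_inj (mulgI (tperm x y))).
  by apply: eq_bigr => s _; rewrite permM tpermL.
have : (\sum_(s : 'S_n) F (s x)) *+ n = (\sum_i F i) *+ n`!.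
  transitivity (\sum_(y < n) \sum_(s : 'S_n) F (s y)).
    by rewrite (eq_bigr _ (fun y _ => indep y)) sumr_const card_ord.
  rewrite exchange_big /= -card_Sn -sumr_const; apply: eq_bigr => s _.
  by rewrite [RHS](reindex_inj (@perm_inj _ s)).
case: n x F {indep} => [[]//|n] x F; rewrite factS mulnC mulrnA.
exact: pmulrnI.
Qed.

Lemma sum_perm3_pairs (D : 'I_3 -> R) (Tr : 'I_3 -> 'I_3 -> 'I_3 -> R) :
  \sum_(s : 'S_3) (D (s 1) - Tr (s 0) (s 1) (s 2) - Tr (s 2) (s 1) (s 0))
  = (\sum_i D i - \sum_(s : 'S_3) Tr (s 0) (s 1) (s 2)) *+ 2.
Proof.
have rev : \sum_(s : 'S_3) Tr (s 2) (s 1) (s 0) = \sum_(s : 'S_3) Tr (s 0) (s 1) (s 2).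
  rewrite [RHS](reindex_inj (mulgI (tperm 0 2))).
  by apply: eq_bigr => s _; rewrite !permM tpermL tpermR tpermD.
by rewrite !sumrB rev (sum_perm_eval 1) /= mulrnBl mulr2n opprD addrA.
Qed.

End perm_sums.

Section sign_certificates.
Context (R : realFieldType).

Lemma mixed_certificate (x y a1 a2 c1 c2 b : R) :
  pm1 x -> pm1 y -> pm1 a1 -> pm1 a2 -> pm1 c1 -> pm1 c2 -> pm1 b ->
  3^-1 * (b * y - x * b) - a1 * b * c2 - a2 * b * c1 <=
  1 + a1 * a2 * (c1 * c2) + 6^-1 * (1 - x * y) * (1 - a1 * a2 * (c1 * c2))
    - 6^-1 * (y - x) * (a1 * c2 + a2 * c1).
Proof. by do 7 case=> ->; lra. Qed.

Lemma aligned_certificate (s x y a1 a2 c1 c2 b : R) :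
  pm1 s -> pm1 x -> pm1 y -> pm1 a1 -> pm1 a2 -> pm1 c1 -> pm1 c2 -> pm1 b ->
  3^-1 * (b * y - x * b) - a1 * b * c2 - a2 * b * c1
    + s * (a1 * b * c1 + a2 * b * c2) <=
  1 - s * (a1 * a2) - s * (c1 * c2) + a1 * a2 * (c1 * c2)
  + 12^-1 * (1 - x * y) * (3 + s * (a1 * a2) + s * (c1 * c2) - a1 * a2 * (c1 * c2))
  + 12^-1 * (y - x) * (s * (a1 * c1 + a2 * c2) - (a1 * c2 + a2 * c1)).
Proof. by do 8 case=> ->; lra. Qed.

End sign_certificates.

Section prodf_expectation.
Context d (T : measurableType d) (R : realType) (P : probability T R) (I : finType).
Implicit Types (X : I -> T -> R) (S : {set I}).

Lemma bounded_measurable_prodf X S :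
  (forall i, bounded_measurable (X i)) -> bounded_measurable (prodf X S).
Proof.
move=> bX; rewrite /prodf -fct_prodE; apply: big_ind => //.
- exact: bounded_measurable_cst.
- by move=> f g; exact: bounded_measurableM.
Qed.

Lemma Er_prodf_norm_le1 X S : (forall i, measurable_fun setT (X i)) ->
  (forall i w, pm1 (X i w)) -> `|Er P (prodf X S)| <= 1.
Proof.
move=> mX X1; apply: Er_norm_le.
  by apply: bounded_measurable_prodf => i; exact: pm1_bounded_measurable.
move=> w; rewrite /prodf normr_prod big1 // => i _.
by case: (X1 i w) => ->; rewrite ?normrN normr1.
Qed.

End prodf_expectation.

Ltac bounded_measurable_tac :=
  repeat first [ assumption | apply: bounded_measurable_cst
    | apply: bounded_measurableB | apply: bounded_measurableD
    | apply: bounded_measurableM | apply: bounded_measurable_prodf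
    | match goal with H : forall _, bounded_measurable _ |- _ => apply: H end ].

Ltac Er_lin :=
  repeat first [ rewrite ErB | rewrite ErD | rewrite ErZ | rewrite Er_cst ];
  try solve [bounded_measurable_tac].

Section bell_bound.
Context d (T : measurableType d) (R : realType) (P : probability T R).
Variables A B C : 'I_3 -> T -> R.
Hypotheses (mA : forall i, measurable_fun setT (A i))
  (mB : forall i, measurable_fun setT (B i)) (mC : forall i, measurable_fun setT (C i)).
Hypotheses (hA : forall i w, pm1 (A i w)) (hB : forall i w, pm1 (B i w))
  (hC : forall i w, pm1 (C i w)).
Hypothesis hAC : forall k1 k2 k3 k4 k5 k6 : bool,
  ('E_P[fun w => (A 0 w ^+ k1 * A 1 w ^+ k2 * A 2 w ^+ k3
                  * C 0 w ^+ k4 * C 1 w ^+ k5 * C 2 w ^+ k6)%R]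
   = 'E_P[fun w => (A 0 w ^+ k1 * A 1 w ^+ k2 * A 2 w ^+ k3)%R]
     * 'E_P[fun w => (C 0 w ^+ k4 * C 1 w ^+ k5 * C 2 w ^+ k6)%R])%E.
Hypotheses (hEA : forall i, ('E_P[A i] = 0)%E) (hEC : forall i, ('E_P[C i] = 0)%E).
Hypothesis hABC : forall i j k : 'I_3, (#|[set i; j; k]| <= 2)%N ->
  ('E_P[fun w => (A i w * B j w * C k w)%R] = 0)%E.

Let bmA i : bounded_measurable (A i) := pm1_bounded_measurable (mA i) (hA i).
Let bmB i : bounded_measurable (B i) := pm1_bounded_measurable (mB i) (hB i).
Let bmC i : bounded_measurable (C i) := pm1_bounded_measurable (mC i) (hC i).

Definition monoAC (S S' : {set 'I_3}) : T -> R := fun w => prodf A S w * prodf C S' w.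

Local Notation alpha S := (Er P (prodf A S)).
Local Notation gamma S := (Er P (prodf C S)).

Lemma Er_monoAC S S' : Er P (monoAC S S') = alpha S * gamma S'.
Proof.
have E3 (X : 'I_3 -> T -> R) U w : prodf X U w
    = X 0 w ^+ (0 \in U) * X 1 w ^+ (1 \in U) * X 2 w ^+ (2 \in U).
  exact: prod_ord3.
rewrite /Er (_ : monoAC S S' = fun w => A 0 w ^+ (0 \in S) * A 1 w ^+ (1 \in S)
    * A 2 w ^+ (2 \in S) * C 0 w ^+ (0 \in S') * C 1 w ^+ (1 \in S') * C 2 w ^+ (2 \in S')).
  rewrite hAC -(funext (E3 A S)) -(funext (E3 C S')).
  by rewrite !ErE //; exact: bounded_measurable_prodf.
by apply/funext => w; rewrite /monoAC !E3 !mulrA.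
Qed.

Lemma Er_prodfA_set1 m : alpha [set m] = 0.
Proof. by rewrite prodf_set1 /Er hEA. Qed.

Lemma Er_prodfC_set1 m : gamma [set m] = 0.
Proof. by rewrite prodf_set1 /Er hEC. Qed.

Lemma Er_prodfAC_le1 S S' : alpha S * gamma S' <= 1.
Proof.
rewrite (le_trans (ler_norm _)) // normrM mulr_ile1 ?normr_ge0 //;
  exact: Er_prodf_norm_le1.
Qed.

Section slice.
Variables i j k : 'I_3.
Hypotheses (neq_ij : i != j) (neq_jk : j != k) (neq_ik : i != k).

Local Notation ik := [set i; k].
Local Notation jik := (j |: [set i; k]).

Definition bell_slice : T -> R := fun w =>
  3^-1 * (B j w * C j w - A j w * B j w) - A i w * B j w * C k w - A k w * B j w * C i w.

Definition null_terms : T -> R := fun w =>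
  A i w * B j w * C i w + A k w * B j w * C k w.

(* The majorants are the right-hand sides of [mixed_certificate] and
   [aligned_certificate], expanded into A-monomials times C-monomials so that
   [Er_monoAC] evaluates them. *)
Definition mixed_majorant : T -> R := fun w =>
  1 + monoAC ik ik w
  + 6^-1 * (1 - monoAC [set j] [set j] w - monoAC ik ik w + monoAC jik jik w)
  - 6^-1 * (monoAC [set i] [set j; k] w + monoAC [set k] [set j; i] w
            - monoAC [set j; i] [set k] w - monoAC [set j; k] [set i] w).

Definition aligned_majorant (s : R) : T -> R := fun w =>
  1 - s * prodf A ik w - s * prodf C ik w + monoAC ik ik w
  + 12^-1 * (3 + s * prodf A ik w + s * prodf C ik w - monoAC ik ik w
             - 3 * monoAC [set j] [set j] w - s * monoAC jik [set j] w
             - s * monoAC [set j] jik w + monoAC jik jik w)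
  + 12^-1 * (s * (monoAC [set i] [set j; i] w + monoAC [set k] [set j; k] w
                  - monoAC [set j; i] [set i] w - monoAC [set j; k] [set k] w)
             - (monoAC [set i] [set j; k] w + monoAC [set k] [set j; i] w
                - monoAC [set j; i] [set k] w - monoAC [set j; k] [set i] w)).

Lemma Er_bell_slice : Er P bell_slice =
  3^-1 * (Er P (fun w => B j w * C j w) - Er P (fun w => A j w * B j w))
  - Er P (fun w => A i w * B j w * C k w) - Er P (fun w => A k w * B j w * C i w).
Proof. by rewrite /bell_slice; Er_lin. Qed.

Lemma Er_null_terms : Er P null_terms = 0.
Proof.
have card_pjp p : (#|[set p; j; p]| <= 2)%N.
  by rewrite finset.setUAC finset.setUid cards2; case: (p != j).
by rewrite /null_terms; Er_lin; rewrite /Er !hABC // addr0.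
Qed.

Lemma Er_mixed_majorant : Er P mixed_majorant =
  1 + alpha ik * gamma ik + 6^-1 * (1 - alpha ik * gamma ik + alpha jik * gamma jik).
Proof.
rewrite /mixed_majorant; Er_lin.
by rewrite !Er_monoAC !Er_prodfA_set1 !Er_prodfC_set1; ring.
Qed.

Let prodf_pairs (X : 'I_3 -> T -> R) w :
  [/\ prodf X ik w = X i w * X k w, prodf X [set j; i] w = X j w * X i w,
      prodf X [set j; k] w = X j w * X k w
    & prodf X jik w = X j w * (X i w * X k w)].
Proof.
have j_notin_ik : j \notin ik by rewrite !inE negb_or eq_sym neq_ij neq_jk.
by rewrite [prodf X jik w]prodf_setU1 // !prodf_set2 // eq_sym.
Qed.

Lemma Er_aligned_majorant s : Er P (aligned_majorant s) =
  1 - s * alpha ik - s * gamma ik + alpha ik * gamma ik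
  + 12^-1 * (3 + s * alpha ik + s * gamma ik - alpha ik * gamma ik
             + alpha jik * gamma jik).
Proof.
rewrite /aligned_majorant; Er_lin.
by rewrite !Er_monoAC !Er_prodfA_set1 !Er_prodfC_set1; ring.
Qed.

Lemma bell_slice_le_mixed w : bell_slice w <= mixed_majorant w.
Proof.
rewrite /mixed_majorant /monoAC !prodf_set1.
case: (prodf_pairs A w) (prodf_pairs C w) => -> -> -> -> [-> -> -> ->].
have := mixed_certificate (hA j w) (hC j w) (hA i w) (hA k w) (hC i w) (hC k w) (hB j w).
by rewrite /bell_slice; lra.
Qed.

Lemma bell_slice_le_aligned s : pm1 s ->
  forall w, bell_slice w + s * null_terms w <= aligned_majorant s w.
Proof.
move=> s1 w; rewrite /aligned_majorant /monoAC !prodf_set1.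
case: (prodf_pairs A w) (prodf_pairs C w) => -> -> -> -> [-> -> -> ->].
have := aligned_certificate s1
  (hA j w) (hC j w) (hA i w) (hA k w) (hC i w) (hC k w) (hB j w).
by rewrite /bell_slice /null_terms; lra.
Qed.

Lemma bell_slice_bound : Er P bell_slice <= 4/3.
Proof.
have /andP[al_ge al_le] : -1 <= alpha ik <= 1 by rewrite -ler_norml Er_prodf_norm_le1.
have /andP[ga_ge ga_le] : -1 <= gamma ik <= 1 by rewrite -ler_norml Er_prodf_norm_le1.
have m_le := Er_prodfAC_le1 jik jik.
have [mixed|aligned] := lerP (alpha ik * gamma ik) 0.
  apply: le_trans (Er_le P _ _ bell_slice_le_mixed) _; last first.
    by rewrite Er_mixed_majorant; nra.
  all: rewrite /bell_slice /mixed_majorant; bounded_measurable_tac.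
have [s [s1 sa sg]] : exists s : R, [/\ pm1 s, 0 <= s * alpha ik & 0 <= s * gamma ik].
  have [a_ge0|a_lt0] := leP 0 (alpha ik); [exists 1 | exists (-1)];
    rewrite /pm1 ?mul1r ?mulN1r; split; by [left | right | nra].
have -> : Er P bell_slice = Er P (fun w => bell_slice w + s * null_terms w).
  rewrite ErD ?ErZ ?Er_null_terms ?mulr0 ?addr0 //;
    rewrite /bell_slice /null_terms; bounded_measurable_tac.
apply: le_trans (Er_le P _ _ (bell_slice_le_aligned s1)) _; last first.
  by rewrite Er_aligned_majorant; case: s1 sa sg => -> ? ?; nra.
all: rewrite /bell_slice /null_terms /aligned_majorant; bounded_measurable_tac.
Qed.

End slice.

Lemma bell_sum_le4 :
  3^-1 * \sum_(i < 3) (Er P (fun w => B i w * C i w) - Er P (fun w => A i w * B i w))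
  - \sum_(s : 'S_3) Er P (fun w => A (s 0) w * B (s 1) w * C (s 2) w) <= 4.
Proof.
have := sum_perm3_pairs
  (fun j => 3^-1 * (Er P (fun w => B j w * C j w) - Er P (fun w => A j w * B j w)))
  (fun i j k => Er P (fun w => A i w * B j w * C k w)).
rewrite -mulr_sumr -(ler_pMn2r (ltn0Sn 1)) => <-.
rewrite -(eq_bigr _ (fun (s : 'S_3) _ => Er_bell_slice (s 0) (s 1) (s 2))).
have slice_le (s : 'S_3) : Er P (bell_slice (s 0) (s 1) (s 2)) <= 4 / 3.
  by apply: bell_slice_bound; rewrite (inj_eq perm_inj).
apply: le_trans (ler_sum _ (fun s _ => slice_le s)) _.
by rewrite sumr_const card_Sn -[3`!]/6%N; lra.
Qed.

End bell_bound.

Local Open Scope ereal_scope.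

Theorem proposition5p3 (d : measure_display) (T : measurableType d)
  (R : realType) (P : probability T R)
  (A B C : 'I_3 -> {RV P >-> R})
  (hA : forall i w, A i w = 1%R \/ A i w = (-1)%R)
  (hB : forall i w, B i w = 1%R \/ B i w = (-1)%R)
  (hC : forall i w, C i w = 1%R \/ C i w = (-1)%R)
  (hAC : forall k1 k2 k3 k4 k5 k6 : bool,
     'E_P[fun w => (A 0 w ^+ k1 * A 1 w ^+ k2 * A 2 w ^+ k3
                     * C 0 w ^+ k4 * C 1 w ^+ k5 * C 2 w ^+ k6)%R]
     = 'E_P[fun w => (A 0 w ^+ k1 * A 1 w ^+ k2 * A 2 w ^+ k3)%R]
       * 'E_P[fun w => (C 0 w ^+ k4 * C 1 w ^+ k5 * C 2 w ^+ k6)%R])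
  (hEA : forall i, 'E_P[A i] = 0)
  (hEB : forall i, 'E_P[B i] = 0)
  (hEC : forall i, 'E_P[C i] = 0)
  (hAB : forall i j, i != j -> 'E_P[fun w => (A i w * B j w)%R] = 0)
  (hBC : forall i j, i != j -> 'E_P[fun w => (B i w * C j w)%R] = 0)
  (hABC : forall i j k : 'I_3, (#|[set i; j; k]| <= 2)%N ->
     'E_P[fun w => (A i w * B j w * C k w)%R] = 0) :
  (3^-1)%:E * (\sum_(i < 3) ('E_P[fun w => (B i w * C i w)%R]
                             - 'E_P[fun w => (A i w * B i w)%R]))
  - \sum_(s : 'S_3) 'E_P[fun w => (A (s 0) w * B (s 1) w * C (s 2) w)%R]
  <= 4%:E.
Proof.
have bmA i : bounded_measurable (A i) by apply: pm1_bounded_measurable => //; exact: hA.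
have bmB i : bounded_measurable (B i) by apply: pm1_bounded_measurable => //; exact: hB.
have bmC i : bounded_measurable (C i) by apply: pm1_bounded_measurable => //; exact: hC.
rewrite (eq_bigr (fun i => (Er P (fun w => B i w * C i w)
                            - Er P (fun w => A i w * B i w))%:E)); last first.
  by move=> i _; rewrite !ErE //; bounded_measurable_tac.
rewrite (eq_bigr (fun s : 'S_3 => (Er P (fun w => A (s 0) w * B (s 1) w * C (s 2) w))%:E));
  last by move=> s _; rewrite ErE //; bounded_measurable_tac.
rewrite !sumEFin -EFinM -EFinB lee_fin.
by apply: bell_sum_le4.
Qed.
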